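(* Let $A\in\mathbb{R}^{2\times2}$ be such that $(e^{t(A-s(A))})_{t\ge0}$ is bounded. If the semigroup $(e^{tA})_{t\ge0}$ is asymptotically positive, then it is positive.
   Context: $\mathbb{C}^2$ carries the coordinatewise order; $d_+(f)=\operatorname{dist}(f,\mathbb{C}^2_+)$; $s(A)$ is the spectral bound. The semigroup is asymptotically positive if $d_+(e^{t(A-s(A))}f)\to0$ as $t\to\infty$ for every $f\ge0$; positive means every $e^{tA}$ has non-negative entries. *)

From HB Require Import structures.
From mathcomp Require Import all_boot all_order all_algebra.
From mathcomp Require Import complex.
From mathcomp Require Import all_classical all_reals all_analysis.
Set Implicit Arguments. Unset Strict Implicit. Unset Printing Implicit Defensive.
Import Order.TTheory GRing.Theory Num.Theory.
Import numFieldNormedType.Exports.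
Local Open Scope classical_set_scope.
Local Open Scope ring_scope.

Definition expmx (R : realType) (n : nat) (M : 'M[R]_n.+1) : 'M[R]_n.+1 :=
  limn (fun N : nat => \sum_(k < N) (k`!%:R)^-1 *: M ^+ k).

Definition complexify (R : realType) (n : nat) (M : 'M[R]_n) : 'M[R[i]]_n :=
  map_mx (fun x : R => (x%:C)%C) M.

Definition spectral_bound (R : realType) (n : nat) (A : 'M[R]_n) : R :=
  sup [set complex.Re z | z in [set z : R[i] | eigenvalue (complexify A) z]].

Definition nonneg_vec (R : realType) (n : nat) (f : 'cV[R]_n) : Prop :=
  forall i, 0 <= f i 0.

Definition dpos (R : realType) (n : nat) (f : 'cV[R]_n) : R :=
  inf [set `|f - g| | g in [set g : 'cV[R]_n | nonneg_vec g]].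

Definition positive_semigroup (R : realType) (n : nat) (A : 'M[R]_n.+1) : Prop :=
  forall t : R, 0 <= t -> forall i j, 0 <= expmx (t *: A) i j.

Definition rescaled_bounded (R : realType) (n : nat) (A : 'M[R]_n.+1) : Prop :=
  exists M : R, forall t : R, 0 <= t ->
    `|expmx (t *: (A - (spectral_bound A)%:M))| <= M.

Definition asymptotically_positive (R : realType) (n : nat) (A : 'M[R]_n.+1) : Prop :=
  forall f : 'cV[R]_n.+1, nonneg_vec f ->
    dpos (expmx (t *: (A - (spectral_bound A)%:M)) *m f) @[t --> +oo] --> 0.

From HB Require Import structures.
From mathcomp Require Import all_boot all_order all_algebra.
From mathcomp Require Import complex.
From mathcomp Require Import all_classical all_reals all_analysis.
From mathcomp Require Import ring lra.

(** Everything is governed by the discriminant [D = (tr A)^2 - 4 det A] of the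
    characteristic polynomial, through the Cayley-Hamilton identity
    [(A - l)^2 = (tr A - 2 l) (A - l) - chi_A(l)].
    - If [D > 0], then [A = l1 P + l2 (1 - P)] with [l1 = s(A) > l2] and [P] the
      spectral projection of [l1]. The rescaled semigroup tends to [P], so
      asymptotic positivity forces [P >= 0]; since [tr P = 1] the diagonal of
      [1 - P] is nonnegative too and [e^{tA} = e^{t l1} P + e^{t l2} (1 - P) >= 0].
    - If [D = 0], then [N = A - s(A)] satisfies [N^2 = 0], so
      [e^{t(A - s(A))} = 1 + t N] is bounded only if [N = 0], i.e. [A] is scalar.
    - If [D < 0], then [e^{t(A - s(A))}] is a rotation which equals [-1] at
      arbitrarily large times, so [A] is not asymptotically positive. *)

Set Implicit Arguments.
Unset Strict Implicit.
Unset Printing Implicit Defensive.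

Import Order.TTheory GRing.Theory Num.Theory.
Import numFieldNormedType.Exports.
Local Open Scope classical_set_scope.
Local Open Scope ring_scope.

Section CharPoly2.
Variable R : comNzRingType.
Implicit Type A : 'M[R]_2.

Lemma char_poly_mx2 A : char_poly A = 'X^2 - (\tr A)%:P * 'X + (\det A)%:P.
Proof.
apply/polyP => -[|[|[|k]]]; rewrite !(coefD, coefN, coefXn, coefCM, coefX, coefC) /=
  ?mulr0 ?mulr1 ?oppr0 ?add0r ?addr0.
- by rewrite char_poly_det expr2 mulrNN !mul1r.
- by rewrite char_poly_trace.
- by have := char_poly_monic A; rewrite monicE lead_coefE size_char_poly => /eqP.
- by rewrite nth_default ?size_char_poly.
Qed.

Lemma mx2_shift_sqr A (l : R) : (A - l%:M) ^+ 2 =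
  (\tr A - 2 * l) *: (A - l%:M) - (l ^+ 2 - \tr A * l + \det A)%:M.
Proof.
have hX : A - l%:M = horner_mx A ('X - l%:P).
  by rewrite rmorphB /= horner_mx_X horner_mx_C.
have hp : ('X - l%:P) ^+ 2 = (\tr A - 2 * l)%:P * ('X - l%:P)
    - (l ^+ 2 - \tr A * l + \det A)%:P + char_poly A.
  by rewrite char_poly_mx2 !(rmorphB, rmorphD, rmorphM, rmorphXn, rmorph_nat); ring.
rewrite hX -rmorphXn hp rmorphD /= Cayley_Hamilton addr0 rmorphB rmorphM /=.
by rewrite !horner_mx_C -mulmxE mul_scalar_mx.
Qed.

End CharPoly2.

Lemma eigenvalue_mx2 (F : fieldType) (A : 'M[F]_2) z :
  eigenvalue A z = (z ^+ 2 - \tr A * z + \det A == 0).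
Proof. by rewrite eigenvalue_root_char char_poly_mx2 rootE !hornerE. Qed.

Section SpectralBound2.
Variable R : realType.
Implicit Type A : 'M[R]_2.

Definition mxdisc A : R := \tr A ^+ 2 - 4 * \det A.

Lemma eigenvalue_complexify A z : eigenvalue (complexify A) z =
  (z ^+ 2 - (\tr A)%:C%C * z + (\det A)%:C%C == 0).
Proof.
rewrite eigenvalue_mx2 (_ : complexify A = map_mx (real_complex R) A) //.
by rewrite trace_map_mx det_map_mx.
Qed.

(** [Num.sqrt] vanishes on negative numbers, so the formula also covers the case
    of two complex conjugate eigenvalues with real part [tr A / 2]. *)
Lemma spectral_bound_mx2 A : spectral_bound A = (\tr A + Num.sqrt (mxdisc A)) / 2.
Proof.
set T := \tr A; set D := mxdisc A; set s := Num.sqrt D; set u := Num.sqrt (- D).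
have [su ssuu] : s * u = 0 /\ s ^+ 2 - u ^+ 2 = D.
  have [D0|D0] := leP 0 D.
    by rewrite /u ler0_sqrtr ?oppr_le0 // mulr0 expr0n subr0 sqr_sqrtr.
  by rewrite /s ler0_sqrtr ?ltW // mul0r expr0n sub0r sqr_sqrtr ?opprK // oppr_ge0 ltW.
(* One of [s], [u] vanishes, so [r1] and [r2] are the roots whatever the sign of [D]. *)
pose r1 := ((T + s) / 2 +i* (u / 2))%C; pose r2 := ((T - s) / 2 +i* (- (u / 2)))%C.
have eig z : eigenvalue (complexify A) z <-> z = r1 \/ z = r2.
  rewrite eigenvalue_complexify.
  have -> : z ^+ 2 - T%:C%C * z + (\det A)%:C%C = (z - r1) * (z - r2).
    have -> : T%:C%C = r1 + r2.
      by apply/eqP; rewrite eq_complex /=; apply/andP; split; apply/eqP; lra.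
    have -> : (\det A)%:C%C = r1 * r2.
      apply/eqP; rewrite eq_complex /=; apply/andP; split; apply/eqP.
      - by move: ssuu; rewrite /D /mxdisc -/T; nra.
      - nra.
    ring.
  rewrite mulf_eq0 !subr_eq0.
  by split => [/orP[] /eqP|[] ->]; rewrite ?eqxx ?orbT; auto.
have s0 : 0 <= s := sqrtr_ge0 D.
rewrite /spectral_bound (_ : [set _ | _ in _] = [set (T - s) / 2] `|` [set (T + s) / 2]).
  by rewrite sup_setU ?sup1 // => _ _ -> ->; lra.
by apply/seteqP; split => [_ [z /eig [] -> <-] | x [] ->];
  [right | left | exists r2 | exists r1] => //; apply/eig; auto.
Qed.

End SpectralBound2.

Section MatrixExponential.
Variables (R : realType) (n : nat).
Implicit Types (M P N B : 'M[R]_n.+1) (t w x y : R).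

Lemma expmx_lincomb M U V (a b : R^nat) (la lb : R) :
  (forall k, k`!%:R^-1 *: M ^+ k = a k *: U + b k *: V) ->
  series a @ \oo --> la -> series b @ \oo --> lb -> expmx M = la *: U + lb *: V.
Proof.
move=> eM ha hb; rewrite /expmx.
have -> : (fun m : nat => \sum_(k < m) k`!%:R^-1 *: M ^+ k) =
    (fun m => series a m *: U + series b m *: V).
  apply/funext => m; under eq_bigr do rewrite eM.
  by rewrite big_split /= -!scaler_suml /series /= !big_mkord.
by apply: cvg_lim => //; apply: cvgD; apply: cvgZ => //; exact: cvg_cst.
Qed.

Lemma expmx_idempotent P x y : P * P = P ->
  expmx (x *: P + y *: (1 - P)) = expR x *: P + expR y *: (1 - P).
Proof.
move=> PP.
have PQ : P * (1 - P) = 0 by rewrite mulrBr mulr1 PP subrr.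
have QP : (1 - P) * P = 0 by rewrite mulrBl mul1r PP subrr.
have QQ : (1 - P) * (1 - P) = 1 - P by rewrite mulrBr mulr1 QP subr0.
have pow k : (x *: P + y *: (1 - P)) ^+ k = x ^+ k *: P + y ^+ k *: (1 - P).
  elim: k => [|k IH]; first by rewrite !expr0 !scale1r addrC subrK.
  rewrite exprSr IH mulrDl !mulrDr -!scalerAl -!scalerAr !scalerA PP QQ PQ QP.
  by rewrite !scaler0 addr0 add0r -!exprSr.
apply: expmx_lincomb (is_cvg_series_exp_coeff x) (is_cvg_series_exp_coeff y) => k.
by rewrite pow scalerDr !scalerA ![_^-1 * _]mulrC.
Qed.

Lemma expmx_scalar x : expmx x%:M = (expR x)%:M :> 'M[R]_n.+1.
Proof.
have := @expmx_idempotent 1 x 0 (mulr1 1).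
by rewrite subrr !scaler0 !addr0 !scalemx1.
Qed.

Lemma expmx_square_zero N t : N * N = 0 -> expmx (t *: N) = 1 + t *: N.
Proof.
move=> NN.
have coef k : k`!%:R^-1 *: (t *: N) ^+ k = exp_coeff 0 k *: 1 + (t * (k == 1)%:R) *: N.
  rewrite exprZn /exp_coeff /=; case: k => [|[|k]]; rewrite ?fact0 /= ?invr1
    !(expr0, expr1, mul1r, mulr1, mulr0, scale1r, scale0r, addr0, add0r) //.
  by rewrite 2![N ^+ _]exprS mulrA NN !mul0r expr0n /= mul0r !scaler0 scale0r.
have -> : 1 + t *: N = expR 0 *: 1 + t *: N by rewrite expR0 scale1r.
apply: expmx_lincomb coef (is_cvg_series_exp_coeff 0) _.
apply: cvg_near_cst; exists 2%N => // -[|[|k]] // _.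
rewrite /series /= !big_nat_recl // big1 ?addr0 => [|i _]; last by rewrite mulr0.
by rewrite mulr0 add0r mulr1.
Qed.

Lemma expmx_rotation B w t : w != 0 -> B * B = (- w ^+ 2)%:M ->
  expmx (t *: B) = cos (w * t) *: 1 + sin (w * t) *: (w^-1 *: B).
Proof.
move=> w0 BB.
have even m : B ^+ m.*2 = (- w ^+ 2) ^+ m *: 1.
  elim: m => [|m IH]; first by rewrite expr0 scale1r.
  rewrite doubleS !exprS IH mulrA BB -scalemx1 -!scalerAl mul1r.
  by rewrite -scalerAr mulr1 scalerA.
have sq m : (- w ^+ 2) ^+ m = (-1) ^+ m * w ^+ m.*2.
  by rewrite -[- _]mulN1r exprMn -muln2 mulnC exprM.
have fact_neq0 k : k`!%:R != 0 :> R by rewrite pnatr_eq0 -lt0n fact_gt0.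
apply: expmx_lincomb; last 2 first.
- by rewrite cos.unlock; exact: is_cvg_series_cos_coeff.
- by rewrite sin.unlock; exact: is_cvg_series_sin_coeff.
move=> k; rewrite exprZn -(odd_double_half k); move: k./2 => m.
rewrite /cos_coeff /sin_coeff /=; case: (odd k) => /=; rewrite ?add0n ?add1n.
- rewrite [B ^+ _]exprSr even -scalerAl mul1r odd_double /= !mul0r scale0r add0r.
  rewrite doubleK !scalerA mul1r sq; congr (_ *: _).
  by rewrite !exprMn !exprSr; field; rewrite w0 fact_neq0.
- rewrite even odd_double /= !mul0r scale0r addr0 half_double !scalerA mul1r sq.
  by congr (_ *: _); rewrite !exprMn -exprnP; field.
Qed.

Lemma expmx_rotation_eqN1 B w : 0 < w -> B * B = (- w ^+ 2)%:M ->
  forall T, exists2 t, T < t & expmx (t *: B) = -1.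
Proof.
move=> w0 BB T; pose k := (Num.truncn (T * w)).+1.
have kT : T * w < k%:R := truncnS_gt (T * w).
exists ((pi + pi *+ 2 *+ k) / w).
  rewrite ltr_pdivlMr // (lt_le_trans kT) // -mulr_natr -[pi *+ 2]mulr_natr.
  have := pi_ge2 R; have : 0 <= k%:R :> R := ler0n _ _; nra.
rewrite (expmx_rotation _ (lt0r_neq0 w0) BB) mulrC divfK ?gt_eqF //.
rewrite !periodicn ?cospi ?sinpi ?scale0r ?addr0 ?scaleN1r //.
- exact: sinD2pi.
- exact: cosD2pi.
Qed.

End MatrixExponential.

Section Positivity.
Variable R : realType.

Lemma mx_entry_le_norm m n (M : 'M[R]_(m, n)) i j : `|M i j| <= `|M|.
Proof. by rewrite [leRHS]mx_normrE; exact: (le_bigmax _ _ (i, j)). Qed.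

Lemma dpos_ge_oppr_entry n (f : 'cV[R]_n) i : - f i 0 <= dpos f.
Proof.
apply: lb_le_inf; first by exists `|f - 0|, 0 => // k; rewrite mxE.
move=> _ [g g0 <-]; apply: (le_trans _ (mx_entry_le_norm (f - g) i 0)).
by rewrite !mxE -normrN opprB (le_trans _ (ler_norm _)) // lerDr g0.
Qed.

Lemma nonneg_vec_delta n (j : 'I_n) : nonneg_vec (delta_mx j 0 : 'cV[R]_n).
Proof. by move=> k; rewrite mxE ler0n. Qed.

Lemma entry_limit_ge0 m (G : R -> 'M[R]_m) i j (p : R) :
  (forall f, nonneg_vec f -> dpos (G t *m f) @[t --> +oo] --> 0) ->
  G t i j @[t --> +oo] --> p -> 0 <= p.
Proof.
move=> HG Gp; rewrite -oppr_le0.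
apply: (ler_cvg_to (cvgN Gp) (HG _ (nonneg_vec_delta j))); apply: nearW => t.
by have := dpos_ge_oppr_entry (G t *m delta_mx j 0) i; rewrite -colE mxE.
Qed.

Lemma idempotent_comb_ge0 n (P : 'M[R]_n) (e1 e2 : R) :
  (forall i j, 0 <= P i j) -> \tr P = 1 -> 0 <= e2 <= e1 ->
  forall i j, 0 <= (e1 *: P + e2 *: (1 - P)) i j.
Proof.
move=> P0 trP /andP[e20 e21] i j; rewrite !mxE.
have [<-|_] := eqVneq i j; last first.
  by rewrite mulr0n sub0r mulrN -mulrBl mulr_ge0 ?subr_ge0.
have Pii : P i i <= 1.
  rewrite -trP /mxtrace (bigD1 i) //= lerDl; exact: sumr_ge0.
rewrite /=; have := P0 i i; nra.
Qed.

Lemma bounded_expmx_square_zero n (N : 'M[R]_n.+1) : N * N = 0 ->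
  (exists M, forall t, 0 <= t -> `|expmx (t *: N)| <= M) -> N = 0.
Proof.
move=> NN [M HM]; apply/matrixP => i j; rewrite mxE; apply/eqP/negPn/negP => Nij.
have Nij0 : 0 < `|N i j| by rewrite normr_gt0.
pose t := (`|M| + 2) / `|N i j|.
have t0 : 0 <= t by rewrite divr_ge0 // addr_ge0.
have tN : t * `|N i j| = `|M| + 2 by rewrite divfK // gt_eqF.
have := HM t t0; rewrite expmx_square_zero //; apply/negP; rewrite -ltNge.
apply: (lt_le_trans _ (mx_entry_le_norm _ i j)); rewrite !mxE addrC.
apply: (lt_le_trans _ (lerB_normD _ _)); rewrite normrM (ger0_norm t0) tN.
have : `|(i == j)%:R : R| <= 1 by case: (i == j); rewrite ?normr1 ?normr0.
have := ler_norm M; lra.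
Qed.

Lemma cvgr_expR_mulr (mu : R) : mu < 0 -> expR (t * mu) @[t --> +oo] --> 0.
Proof.
move=> mu0.
have -> : (fun t => expR (t * mu)) = (fun x => expR (- x)) \o (fun t => t * - mu).
  by apply/funext => t; rewrite /= mulrN opprK.
apply: (cvg_comp _ _ _ (@cvgr_expR R)).
by apply: gt0_cvgMly; [rewrite oppr_gt0 | exact: cvg_id].
Qed.

Lemma asymptotic_limit_ge0 m (G : R -> 'M[R]_m) (P Q : 'M[R]_m) (mu : R) :
  mu < 0 -> (forall t, G t = P + expR (t * mu) *: Q) ->
  (forall f, nonneg_vec f -> dpos (G t *m f) @[t --> +oo] --> 0) ->
  forall i j, 0 <= P i j.
Proof.
move=> mu0 eG HG i j; apply: (entry_limit_ge0 (i := i) (j := j) HG).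
have -> : (fun t => G t i j) = (fun t => P i j + expR (t * mu) * Q i j).
  by apply/funext => t; rewrite eG !mxE.
rewrite -[X in _ --> X]addr0 -(mul0r (Q i j)).
exact: cvgD (cvg_cst _) (cvgM (cvgr_expR_mulr mu0) (cvg_cst _)).
Qed.

End Positivity.

Section TwoByTwo.
Variable R : realType.
Implicit Type A : 'M[R]_2.

Lemma positive_semigroup_disc_gt0 A :
  0 < mxdisc A -> asymptotically_positive A -> positive_semigroup A.
Proof.
move=> D0 HA.
pose r := Num.sqrt (mxdisc A).
have r0 : 0 < r by rewrite sqrtr_gt0.
have rr : r ^+ 2 = \tr A ^+ 2 - 4 * \det A by rewrite sqr_sqrtr // ltW.
pose l1 := (\tr A + r) / 2; pose l2 := (\tr A - r) / 2.
pose P := r^-1 *: (A - l2%:M).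
have PP : P * P = P.
  have := mx2_shift_sqr A l2.
  rewrite (_ : \tr A - 2 * l2 = r); last by rewrite /l2; lra.
  rewrite (_ : l2 ^+ 2 - \tr A * l2 + \det A = 0); last by rewrite /l2; nra.
  rewrite expr2 raddf0 subr0 => BB.
  by rewrite /P -scalerAl -scalerAr scalerA BB scalerA divfK ?gt_eqF.
have trP : \tr P = 1.
  by rewrite /P mxtraceZ linearB /= mxtrace_scalar /l2 mulr2n; field; rewrite gt_eqF.
have eA t : t *: A = (t * l1) *: P + (t * l2) *: (1 - P).
  by apply/matrixP => i j; rewrite !mxE /l1 /l2; field; rewrite gt_eqF.
have sb : spectral_bound A = l1 by rewrite spectral_bound_mx2.
have P0 : forall i j, 0 <= P i j.
  apply: (asymptotic_limit_ge0 (mu := l2 - l1) (Q := 1 - P) _ _ HA).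
    by rewrite /l1 /l2; lra.
  move=> t; rewrite sb (_ : t *: _ = 0 *: P + (t * (l2 - l1)) *: (1 - P)).
    by rewrite expmx_idempotent // expR0 scale1r.
  by apply/matrixP => i j; rewrite !mxE /l1 /l2; field; rewrite gt_eqF.
move=> t t0; rewrite eA expmx_idempotent //; apply: idempotent_comb_ge0 => //.
by rewrite expR_ge0 ler_expR ler_wpM2l // /l1 /l2; lra.
Qed.

Lemma positive_semigroup_disc_eq0 A :
  mxdisc A = 0 -> rescaled_bounded A -> positive_semigroup A.
Proof.
move=> D0 HB; pose l := \tr A / 2.
have sb : spectral_bound A = l by rewrite spectral_bound_mx2 D0 sqrtr0 addr0.
have NN : (A - l%:M) * (A - l%:M) = 0.
  rewrite -expr2 mx2_shift_sqr (_ : \tr A - 2 * l = 0); last by rewrite /l; lra.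
  rewrite (_ : l ^+ 2 - \tr A * l + \det A = 0); last first.
    by move: D0; rewrite /mxdisc /l; nra.
  by rewrite scale0r raddf0 subr0.
have /eqP : A - l%:M = 0 by apply: bounded_expmx_square_zero NN _; rewrite -sb.
rewrite subr_eq0 => /eqP eA t t0 i j.
by rewrite eA scale_scalar_mx expmx_scalar mxE mulrn_wge0 ?expR_ge0.
Qed.

Lemma not_asymptotically_positive_disc_lt0 A :
  mxdisc A < 0 -> ~ asymptotically_positive A.
Proof.
move=> D0 HA; pose l := \tr A / 2; pose w := Num.sqrt (- mxdisc A) / 2.
have w0 : 0 < w by rewrite divr_gt0 // sqrtr_gt0 oppr_gt0.
have sb : spectral_bound A = l by rewrite spectral_bound_mx2 ler0_sqrtr ?ltW // addr0.
have BB : (A - l%:M) * (A - l%:M) = (- w ^+ 2)%:M.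
  rewrite -expr2 mx2_shift_sqr (_ : \tr A - 2 * l = 0); last by rewrite /l; lra.
  rewrite scale0r sub0r -raddfN /=; congr (_%:M).
  rewrite /w !expr_div_n sqr_sqrtr ?oppr_ge0 ?ltW //.
  by move: D0; rewrite /mxdisc /l; lra.
have [M [_ HM]] := cvgr_lt _ (HA _ (nonneg_vec_delta R 0)) _ ltr01.
have [t Mt Gt] := expmx_rotation_eqN1 w0 BB M.
have := HM t Mt; rewrite sb Gt; apply/negP; rewrite -leNgt.
have := dpos_ge_oppr_entry ((-1) *m delta_mx 0 0 : 'cV[R]_2) 0.
by rewrite mulNmx mul1mx !mxE opprK.
Qed.

End TwoByTwo.

Theorem proposition9p2 (R : realType) (A : 'M[R]_2) :
  rescaled_bounded A -> asymptotically_positive A -> positive_semigroup A.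
Proof.
move=> HB HA; have [D0|D0|D0] := ltgtP (mxdisc A) 0.
- by case: (not_asymptotically_positive_disc_lt0 D0 HA).
- exact: positive_semigroup_disc_gt0.
- exact: positive_semigroup_disc_eq0.
Qed.
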